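(* Let $a,b,c\in\mathcal V(\mathcal B)$ with $a\le_t b\le_t c$. Then (1) $(a\wedge\mathcal U)\otimes(c\vee\mathcal U)\le_k\mathcal U$; (2) $(a\vee\mathcal U)\otimes c\le_k b$; (3) $(a\wedge\mathcal U)\otimes(c\wedge\mathcal U)\le_k b$.
   Context: A bilattice $\langle\mathcal B,\le_t,\le_k\rangle$ is a nonempty set with two partial orders, each making $\mathcal B$ a lattice with top and bottom. Under $\le_t$, meet and join are $\wedge,\vee$, bottom $\mathcal F$, top $\mathcal T$; under $\le_k$, meet and join are $\otimes,\oplus$, bottom $\mathcal U$, top $\mathcal I$. Standing assumptions: $\mathcal B$ is complete for both orders, infinitely distributive, satisfies the (infinitary) interlacing conditions (each of $\wedge,\vee,\otimes,\oplus$ is monotone with respect to both orderings), and has a negation. $\mathcal V(\mathcal B)$ is the set of maps from ground atoms (of a fixed first-order language) to $\mathcal B$ with pointwise orders and operations; $\mathcal U$ also denotes the constant map with value $\mathcal U$. *)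

Definition is_lub {B : Type} (le : B -> B -> Prop) {I : Type} (f : I -> B) (s : B) :=
  (forall i, le (f i) s) /\ (forall z, (forall i, le (f i) z) -> le s z).
Definition is_glb {B : Type} (le : B -> B -> Prop) {I : Type} (f : I -> B) (s : B) :=
  (forall i, le s (f i)) /\ (forall z, (forall i, le z (f i)) -> le z s).

Definition partial_order {B : Type} (le : B -> B -> Prop) :=
  (forall x, le x x) /\ (forall x y, le x y -> le y x -> x = y) /\
  (forall x y z, le x y -> le y z -> le x z).

Record bilattice := Bilattice {
  carrier :> Type;
  le_t : carrier -> carrier -> Prop;
  le_k : carrier -> carrier -> Prop;
  meet_t : carrier -> carrier -> carrier;
  join_t : carrier -> carrier -> carrier;
  meet_k : carrier -> carrier -> carrier;
  join_k : carrier -> carrier -> carrier;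
  bF : carrier; bT : carrier; bU : carrier; bI : carrier;
  neg : carrier -> carrier;
  inf_t : forall I : Type, (I -> carrier) -> carrier;
  sup_t : forall I : Type, (I -> carrier) -> carrier;
  inf_k : forall I : Type, (I -> carrier) -> carrier;
  sup_k : forall I : Type, (I -> carrier) -> carrier;
  le_t_po : partial_order le_t;
  le_k_po : partial_order le_k;
  meet_t_glb : forall x y, is_glb le_t (fun b : bool => if b then x else y) (meet_t x y);
  join_t_lub : forall x y, is_lub le_t (fun b : bool => if b then x else y) (join_t x y);
  meet_k_glb : forall x y, is_glb le_k (fun b : bool => if b then x else y) (meet_k x y);
  join_k_lub : forall x y, is_lub le_k (fun b : bool => if b then x else y) (join_k x y);
  bF_bot : forall x, le_t bF x;
  bT_top : forall x, le_t x bT;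
  bU_bot : forall x, le_k bU x;
  bI_top : forall x, le_k x bI;
  inf_t_glb : forall I (f : I -> carrier), is_glb le_t f (inf_t I f);
  sup_t_lub : forall I (f : I -> carrier), is_lub le_t f (sup_t I f);
  inf_k_glb : forall I (f : I -> carrier), is_glb le_k f (inf_k I f);
  sup_k_lub : forall I (f : I -> carrier), is_lub le_k f (sup_k I f);
  distr : forall (o : carrier -> carrier -> carrier),
    (o = meet_t \/ o = join_t \/ o = meet_k \/ o = join_k) ->
    forall (S : forall I : Type, (I -> carrier) -> carrier),
    (S = inf_t \/ S = sup_t \/ S = inf_k \/ S = sup_k) ->
    forall x I (f : I -> carrier), inhabited I ->
      o x (S I f) = S I (fun i => o x (f i));
  interlace_t : forall I (f g : I -> carrier), (forall i, le_t (f i) (g i)) ->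
    le_t (inf_t I f) (inf_t I g) /\ le_t (sup_t I f) (sup_t I g) /\
    le_t (inf_k I f) (inf_k I g) /\ le_t (sup_k I f) (sup_k I g);
  interlace_k : forall I (f g : I -> carrier), (forall i, le_k (f i) (g i)) ->
    le_k (inf_t I f) (inf_t I g) /\ le_k (sup_t I f) (sup_t I g) /\
    le_k (inf_k I f) (inf_k I g) /\ le_k (sup_k I f) (sup_k I g);
  neg_t : forall x y, le_t x y -> le_t (neg y) (neg x);
  neg_k : forall x y, le_k x y -> le_k (neg x) (neg y);
  neg_invol : forall x, neg (neg x) = x
}.

(* V(B): valuations = maps from ground atoms (an arbitrary type Atom) to B,
   with pointwise orders and operations. *)
Section Valuations.
Variables (Atom : Type) (B : bilattice).
Definition valuation := Atom -> B.
Definition vle_t (v w : valuation) := forall p, le_t B (v p) (w p).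
Definition vle_k (v w : valuation) := forall p, le_k B (v p) (w p).
Definition vmeet_t (v w : valuation) : valuation := fun p => meet_t B (v p) (w p).
Definition vjoin_t (v w : valuation) : valuation := fun p => join_t B (v p) (w p).
Definition vmeet_k (v w : valuation) : valuation := fun p => meet_k B (v p) (w p).
Definition vjoin_k (v w : valuation) : valuation := fun p => join_k B (v p) (w p).
Definition vU : valuation := fun _ => bU B.
End Valuations.
Arguments vle_t {Atom B}. Arguments vle_k {Atom B}.
Arguments vmeet_t {Atom B}. Arguments vjoin_t {Atom B}.
Arguments vmeet_k {Atom B}. Arguments vjoin_k {Atom B}.
Arguments vU {Atom B}.

From Stdlib Require Import Setoid.

(* If m is k-below both ends of a t-interval [x, z], then m (x) x = m = m (x) z,
   and since (x) is t-monotone (interlacing) m (x) y = m for every y in between,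
   i.e. m is k-below y.  Each of the three inequalities is such an instance,
   pointwise, with m the left-hand side: U itself separates a /\ U from c \/ U,
   while a \/ U and a /\ U are k-below a, and c /\ U is k-below c. *)

Lemma is_glb_unique (T I : Type) (le : T -> T -> Prop) (f : I -> T) (s s' : T) :
  partial_order le -> is_glb le f s -> is_glb le f s' -> s = s'.
Proof.
  intros [_ [le_anti _]] [s_lb s_greatest] [s'_lb s'_greatest].
  apply le_anti; [apply s'_greatest | apply s_greatest]; assumption.
Qed.

Lemma is_lub_unique (T I : Type) (le : T -> T -> Prop) (f : I -> T) (s s' : T) :
  partial_order le -> is_lub le f s -> is_lub le f s' -> s = s'.
Proof.
  intros [_ [le_anti _]] [s_ub s_least] [s'_ub s'_least].
  apply le_anti; [apply s_least | apply s'_least]; assumption.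
Qed.

Section BilatticeFacts.
Variable B : bilattice.

Lemma le_t_refl (x : B) : le_t B x x.
Proof. apply (le_t_po B). Qed.

Lemma le_t_anti (x y : B) : le_t B x y -> le_t B y x -> x = y.
Proof. apply (le_t_po B). Qed.

Lemma le_k_refl (x : B) : le_k B x x.
Proof. apply (le_k_po B). Qed.

Lemma le_k_trans (x y z : B) : le_k B x y -> le_k B y z -> le_k B x z.
Proof. apply (le_k_po B). Qed.

(* Interlacing is only postulated for the infinitary operations, so binary
   meets and joins are rewritten as those over a bool-indexed family. *)
Definition pair_family (x y : B) : bool -> B := fun i => if i then x else y.

Lemma pair_family_le (le : B -> B -> Prop) (x y x' y' : B) :
  le x x' -> le y y' -> forall i, le (pair_family x y i) (pair_family x' y' i).
Proof. intros Hx Hy [|]; assumption. Qed.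

Lemma meet_t_inf_t (x y : B) : meet_t B x y = inf_t B bool (pair_family x y).
Proof. apply (is_glb_unique _ _ (le_t B) (pair_family x y)); apply B. Qed.

Lemma join_t_sup_t (x y : B) : join_t B x y = sup_t B bool (pair_family x y).
Proof. apply (is_lub_unique _ _ (le_t B) (pair_family x y)); apply B. Qed.

Lemma meet_k_inf_k (x y : B) : meet_k B x y = inf_k B bool (pair_family x y).
Proof. apply (is_glb_unique _ _ (le_k B) (pair_family x y)); apply B. Qed.

Lemma meet_k_monotone_t (x y x' y' : B) :
  le_t B x x' -> le_t B y y' -> le_t B (meet_k B x y) (meet_k B x' y').
Proof.
  intros Hx Hy. rewrite !meet_k_inf_k.
  apply interlace_t, pair_family_le; assumption.
Qed.

Lemma meet_t_monotone_k (x y x' y' : B) :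
  le_k B x x' -> le_k B y y' -> le_k B (meet_t B x y) (meet_t B x' y').
Proof.
  intros Hx Hy. rewrite !meet_t_inf_t.
  apply interlace_k, pair_family_le; assumption.
Qed.

Lemma join_t_monotone_k (x y x' y' : B) :
  le_k B x x' -> le_k B y y' -> le_k B (join_t B x y) (join_t B x' y').
Proof.
  intros Hx Hy. rewrite !join_t_sup_t.
  apply interlace_k, pair_family_le; assumption.
Qed.

Lemma meet_t_lel (x y : B) : le_t B (meet_t B x y) x.
Proof. apply (proj1 (meet_t_glb B x y) true). Qed.

Lemma meet_t_ler (x y : B) : le_t B (meet_t B x y) y.
Proof. apply (proj1 (meet_t_glb B x y) false). Qed.

Lemma join_t_ger (x y : B) : le_t B y (join_t B x y).
Proof. apply (proj1 (join_t_lub B x y) false). Qed.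

Lemma meet_k_lel (x y : B) : le_k B (meet_k B x y) x.
Proof. apply (proj1 (meet_k_glb B x y) true). Qed.

Lemma meet_k_ler (x y : B) : le_k B (meet_k B x y) y.
Proof. apply (proj1 (meet_k_glb B x y) false). Qed.

Lemma meet_k_idPl (x y : B) : le_k B x y -> meet_k B x y = x.
Proof.
  intros Hxy. apply (le_k_po B); [apply meet_k_lel |].
  apply (proj2 (meet_k_glb B x y)); intros [|]; [apply le_k_refl | exact Hxy].
Qed.

Lemma meet_t_id (x : B) : meet_t B x x = x.
Proof.
  apply le_t_anti; [apply meet_t_lel |].
  apply (proj2 (meet_t_glb B x x)); intros [|]; apply le_t_refl.
Qed.

Lemma join_t_id (x : B) : join_t B x x = x.
Proof.
  apply le_t_anti; [| apply join_t_ger].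
  apply (proj2 (join_t_lub B x x)); intros [|]; apply le_t_refl.
Qed.

Lemma meet_t_U_le_k (x : B) : le_k B (meet_t B x (bU B)) x.
Proof.
  rewrite <- (meet_t_id x) at 2.
  apply meet_t_monotone_k; [apply le_k_refl | apply bU_bot].
Qed.

Lemma join_t_U_le_k (x : B) : le_k B (join_t B x (bU B)) x.
Proof.
  rewrite <- (join_t_id x) at 2.
  apply join_t_monotone_k; [apply le_k_refl | apply bU_bot].
Qed.

Lemma le_k_between_t (m x y z : B) :
  le_k B m x -> le_k B m z -> le_t B x y -> le_t B y z -> le_k B m y.
Proof.
  intros Hmx Hmz Hxy Hyz.
  assert (my_eq_m : meet_k B m y = m).
  { apply le_t_anti.
    - rewrite <- (meet_k_idPl m z Hmz) at 2.
      apply meet_k_monotone_t; [apply le_t_refl | exact Hyz].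
    - rewrite <- (meet_k_idPl m x Hmx) at 1.
      apply meet_k_monotone_t; [apply le_t_refl | exact Hxy]. }
  rewrite <- my_eq_m. apply meet_k_ler.
Qed.

Lemma theorem10_pointwise (x y z : B) :
  le_t B x y -> le_t B y z ->
  le_k B (meet_k B (meet_t B x (bU B)) (join_t B z (bU B))) (bU B) /\
  le_k B (meet_k B (join_t B x (bU B)) z) y /\
  le_k B (meet_k B (meet_t B x (bU B)) (meet_t B z (bU B))) y.
Proof.
  intros Hxy Hyz. split; [| split].
  - apply (le_k_between_t _ (meet_t B x (bU B)) _ (join_t B z (bU B)));
      [apply meet_k_lel | apply meet_k_ler | apply meet_t_ler | apply join_t_ger].
  - apply (le_k_between_t _ x _ z); [| apply meet_k_ler | exact Hxy | exact Hyz].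
    eapply le_k_trans; [apply meet_k_lel | apply join_t_U_le_k].
  - apply (le_k_between_t _ x _ z); [| | exact Hxy | exact Hyz].
    + eapply le_k_trans; [apply meet_k_lel | apply meet_t_U_le_k].
    + eapply le_k_trans; [apply meet_k_ler | apply meet_t_U_le_k].
Qed.

End BilatticeFacts.

Theorem mainTheorem10 (Atom : Type) (B : bilattice) (a b c : valuation Atom B) :
  vle_t a b -> vle_t b c ->
  vle_k (vmeet_k (vmeet_t a vU) (vjoin_t c vU)) vU /\
  vle_k (vmeet_k (vjoin_t a vU) c) b /\
  vle_k (vmeet_k (vmeet_t a vU) (vmeet_t c vU)) b.
Proof.
  intros Hab Hbc.
  split; [| split]; intros p;
    apply (theorem10_pointwise B (a p) (b p) (c p) (Hab p) (Hbc p)).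
Qed.
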